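(* Let $n,t\in\mathbb N$, let $\mathcal H$ be an $n$-vertex hypergraph with more than $tn$ edges, and let $r:=e(\mathcal H)-tn$. If there exist distinct pairwise intersecting edges $e_1,\dots,e_{2r+2}\in\mathcal H$ such that $\{e_{2i-1},e_{2i}\}$ is $t$-useful for every $i\in[r+1]$, then $\chi'_\ell(\mathcal H)<tn$.
   Context: A hypergraph $\mathcal H$ has a finite vertex set $V(\mathcal H)$ and a finite set of edges, each edge $e$ with a nonempty set $V(e)\subseteq V(\mathcal H)$ (multiple edges allowed); $n$-vertex means $|V(\mathcal H)|=n$; $e(\mathcal H)$ is the number of edges. Edges $f_1,\dots,f_k$ are pairwise intersecting if their vertex sets pairwise intersect. $N(e)$ is the set of edges $f\neq e$ with $V(e)\cap V(f)\neq\emptyset$. In an $n$-vertex hypergraph, a pair $\{e,f\}$ of distinct edges is $t$-useful if $V(e)\cap V(f)\neq\emptyset$ and $|N(e)\cap N(f)|\leq tn-3$. The list chromatic index $\chi'_\ell(\mathcal H)$ is the least $s$ such that for every assignment of lists $C(e)$ with $|C(e)|\geq s$ there is a proper edge-colouring $\phi$ (distinct edges of equal colour have disjoint vertex sets) with $\phi(e)\in C(e)$ for all $e$. $[m]=\{1,\dots,m\}$. *)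

From mathcomp Require Import all_boot.
Set Implicit Arguments. Unset Strict Implicit. Unset Printing Implicit Defensive.

(* A hypergraph is given by a finite vertex type V, a finite edge type E
   (so multiple edges are allowed) and the vertex set map verts : E -> {set V};
   nonemptiness of edges is a hypothesis of the theorem. *)

Section Hyper.
Variables (V E : finType) (verts : E -> {set V}).

Definition nbhd (e : E) : {set E} :=
  [set f | (f != e) && (verts e :&: verts f != set0)].

(* {e,f} is t-useful in the n-vertex hypergraph: distinct, intersecting,
   and |N(e) ∩ N(f)| <= t n - 3 (in the integers; written without truncated
   subtraction as |N(e) ∩ N(f)| + 3 <= t n). *)
Definition t_useful (n t : nat) (e f : E) : Prop :=
  [/\ e != f, verts e :&: verts f != set0 & #|nbhd e :&: nbhd f| + 3 <= t * n].

Definition proper_colouring (phi : E -> nat) : Prop :=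
  forall e f, e != f -> phi e = phi f -> [disjoint verts e & verts f].

Definition list_edge_colourable (s : nat) : Prop :=
  forall C : E -> seq nat, (forall e, s <= size (undup (C e))) ->
  exists phi : E -> nat, (forall e, phi e \in C e) /\ proper_colouring phi.

Definition list_chromatic_index_lt (k : nat) : Prop :=
  exists2 s, s < k & list_edge_colourable s.

End Hyper.

From mathcomp Require Import all_boot zify.
Set Implicit Arguments. Unset Strict Implicit. Unset Printing Implicit Defensive.

(* For a useful pair {e, f} at most tn - 3 edges lie in N(e) ∩ N(f), so at
   least r + 1 edges lie outside N(e) ∩ N(f) ∪ {e, f}; Hall's theorem picks
   distinct such edges x_j, one for each of the r + 1 pairs {e_j, f_j}. No x_j
   is one of the pairwise intersecting e_i, and x_j misses e_j or f_j. This
   gives r + 1 disjoint non-adjacent pairs in the line graph of H, which has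
   tn + r vertices. A graph on N vertices whose complement contains a matching
   of size m is (N - m)-choosable: if the two ends of a matching edge share a
   colour, give it to both and recurse; otherwise the lists at the two ends of
   every matching edge are disjoint, and Hall's theorem yields an injective
   choice from the lists. With N = tn + r and m = r + 1, lists of size tn - 1
   suffice. *)

Section Hall.
Variables X T : finType.
Implicit Types (A : X -> {set T}) (I S : {set X}) (R : {set T}) (f : X -> T).

Definition hall_condition A I :=
  forall S, S \subset I -> #|S| <= #|\bigcup_(i in S) A i|.

Definition sdr A I f := {in I &, injective f} /\ {in I, forall i, f i \in A i}.

Lemma hall_conditionS A I S : S \subset I -> hall_condition A I -> hall_condition A S.
Proof. by move=> sSI hI S' sS'S; apply/hI/(subset_trans sS'S). Qed.

Lemma card_bigcup_setD A S R :
  #|\bigcup_(i in S) A i :|: R| <= #|\bigcup_(i in S) (A i :\: R)| + #|R|.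
Proof.
apply: leq_trans (leq_card_setU _ R); apply/subset_leq_card.
rewrite subUset subsetUr andbT; apply/bigcupsP => i iS.
apply/subsetP => c cA; rewrite inE orbC; case: (boolP (c \in R)) => //= cR.
by apply/bigcupP; exists i; rewrite // inE cR.
Qed.

Lemma sdr_glue A I S R f1 f2 :
  S \subset I -> sdr A S f1 -> {in S, forall i, f1 i \in R} ->
  sdr (fun i => A i :\: R) (I :\: S) f2 ->
  sdr A I (fun i => if i \in S then f1 i else f2 i).
Proof.
move=> sSI [f1_inj f1A] f1R [f2_inj f2A].
have f2AR i : i \in I -> i \notin S -> f2 i \in A i :\: R.
  by move=> iI iS; apply: f2A; rewrite inE iS.
split=> [i j iI jI | i iI]; last first.
  by case: ifPn => iS; [apply: f1A | case/setDP: (f2AR i iI iS)].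
case: ifPn => iS; case: ifPn => jS.
- exact: f1_inj.
- by move=> eq_ij; case/setDP: (f2AR j jI jS); rewrite -eq_ij f1R.
- by move=> eq_ij; case/setDP: (f2AR i iI iS); rewrite eq_ij f1R.
- by apply: f2_inj; rewrite inE ?iS ?jS.
Qed.

Lemma hall_condition_tight A I S :
  hall_condition A I -> S \subset I -> #|\bigcup_(i in S) A i| <= #|S| ->
  hall_condition (fun i => A i :\: \bigcup_(j in S) A j) (I :\: S).
Proof.
move=> hI sSI tightS S' /subsetDP[sS'I disS'S].
set U := \bigcup_(j in S) A j in tightS *.
have := hI (S' :|: S); rewrite subUset sSI sS'I.
rewrite cardsU (disjoint_setI0 disS'S) cards0 subn0 bigcup_setU -/U => /(_ isT).
have := card_bigcup_setD A S' U; lia.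
Qed.

Lemma hall_condition_slack A I i0 x :
  i0 \in I ->
  (forall S, S \proper I -> S != set0 -> #|S| < #|\bigcup_(i in S) A i|) ->
  hall_condition (fun i => A i :\: [set x]) (I :\ i0).
Proof.
move=> i0I slackI S sS; have [-> | S_n0] := eqVneq S set0; first by rewrite cards0.
have properS : S \proper I.
  exact: sub_proper_trans sS (properD1 i0I).
have := slackI S properS S_n0; have := card_bigcup_setD A S [set x].
have := subset_leq_card (subsetUl (\bigcup_(i in S) A i) [set x]).
rewrite cards1; lia.
Qed.

Lemma hall_condition_large A I :
  {in I, forall i, #|I| <= #|A i|} -> hall_condition A I.
Proof.
move=> bigA S sSI; have [-> | [i iS]] := set_0Vmem S; first by rewrite cards0.
apply: leq_trans (subset_leq_card sSI) _; apply: leq_trans (bigA i (subsetP sSI i iS)) _.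
exact/subset_leq_card/bigcup_sup.
Qed.

Theorem hall_marriage (t0 : T) A I : hall_condition A I -> exists f, sdr A I f.
Proof.
elim: {I}_.+1 {-2}I (ltnSn #|I|) A => // m IH I leIm A hI.
case: (pickP (fun S => [&& S \proper I, S != set0 & #|\bigcup_(i in S) A i| <= #|S|]))
  => [S /and3P[properS S_n0 tightS] | slackI].
  have sSI := proper_sub properS.
  have [f1 sdr1] := IH S (leq_trans (proper_card properS) leIm) A
                        (hall_conditionS sSI hI).
  have [f2 sdr2] : exists f2, sdr (fun i => A i :\: \bigcup_(j in S) A j) (I :\: S) f2.
    apply: IH; last exact: hall_condition_tight.
    rewrite cardsD (setIidPr sSI); move: S_n0 leIm; rewrite -card_gt0.
    have := subset_leq_card sSI; lia.
  have f1U : {in S, forall i, f1 i \in \bigcup_(j in S) A j}.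
    by case: sdr1 => _ f1A i iS; apply/bigcupP; exists i; last exact: f1A.
  exists (fun i => if i \in S then f1 i else f2 i).
  exact: sdr_glue sSI sdr1 f1U sdr2.
have [-> | [i0 i0I]] := set_0Vmem I; first by exists (fun=> t0); split=> i; rewrite inE.
have [x xA] : exists x, x \in A i0.
  apply/set0Pn; rewrite -card_gt0.
  by have := hI [set i0]; rewrite sub1set i0I cards1 big_set1; apply.
have [f2 sdr2] : exists f2, sdr (fun i => A i :\: [set x]) (I :\ i0) f2.
  apply: IH; first by move: leIm; rewrite (cardsD1 i0) i0I.
  apply: hall_condition_slack => // S properS S_n0.
  by rewrite ltnNge; apply/negP => tightS; move: (slackI S); rewrite properS S_n0 tightS.
exists (fun i => if i \in [set i0] then x else f2 i).
apply: (sdr_glue _ _ _ sdr2); first by rewrite sub1set.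
  by split=> [i j | i]; rewrite !inE => /eqP->; [move=> /eqP-> | ].
by move=> i _; rewrite inE.
Qed.

End Hall.

Section ListColouring.
Variables (X T J : finType) (adj : rel X) (a b : J -> X).
Hypothesis adjC : symmetric adj.
Implicit Types (W S : {set X}) (P : {set J}) (L : X -> {set T}) (phi : X -> T).

Definition nonadjacent_matching W P :=
  [/\ {in P &, injective a}, {in P &, injective b},
      {in P &, forall i j, a i != b j}
    & {in P, forall j, [&& a j \in W, b j \in W & ~~ adj (a j) (b j)]}].

Definition proper_list_colouring L W phi :=
  {in W, forall v, phi v \in L v} /\
  {in W &, forall u v, u != v -> adj u v -> phi u != phi v}.

Lemma card_matching W P : nonadjacent_matching W P -> #|P| + #|P| <= #|W|.
Proof.
case=> a_inj b_inj a_neq_b abW.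
have disj_ab : [disjoint a @: P & b @: P].
  apply/pred0P => x /=; apply/negP => /andP[/imsetP[i iP ->] /imsetP[j jP]].
  by apply/eqP; apply: a_neq_b.
rewrite -{1}(card_in_imset a_inj) -(card_in_imset b_inj).
rewrite -cardsUI (disjoint_setI0 disj_ab) cards0 addn0.
apply/subset_leq_card; rewrite subUset.
by apply/andP; split; apply/subsetP => _ /imsetP[j jP ->]; case/and3P: (abW j jP).
Qed.

Lemma card_avoiding_matching W P S :
  nonadjacent_matching W P -> S \subset W ->
  {in P, forall j, (a j \notin S) || (b j \notin S)} -> #|S| + #|P| <= #|W|.
Proof.
case=> a_inj b_inj a_neq_b abW sSW avoidS.
pose g j := if a j \in S then b j else a j.
have g_inj : {in P &, injective g}.
  move=> i j iP jP; rewrite /g; case: ifP => _; case: ifP => _ eq_ij.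
  - exact: b_inj.
  - by move: (a_neq_b j i jP iP); rewrite eq_ij eqxx.
  - by move: (a_neq_b i j iP jP); rewrite eq_ij eqxx.
  - exact: a_inj.
have gP : g @: P \subset W :\: S.
  apply/subsetP => _ /imsetP[j jP ->]; rewrite /g inE.
  case/and3P: (abW j jP) => aW bW _; have := avoidS j jP.
  by case: ifP => aS; rewrite ?aS ?aW ?bW ?andbT.
have := subset_leq_card gP; rewrite card_in_imset // cardsD (setIidPr sSW).
have := subset_leq_card sSW; lia.
Qed.

Lemma matching_pair_card W P j :
  nonadjacent_matching W P -> j \in P -> #|W| = #|W :\: [set a j; b j]| + 2.
Proof.
case=> _ _ a_neq_b abW jP; case/and3P: (abW j jP) => aW bW _.
have sabW : [set a j; b j] \subset W by rewrite subUset !sub1set aW bW.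
rewrite cardsD (setIidPr sabW) cards2 (a_neq_b j j jP jP).
have := subset_leq_card sabW; rewrite cards2 (a_neq_b j j jP jP); lia.
Qed.

Lemma matching_remove_pair W P j :
  nonadjacent_matching W P -> j \in P ->
  nonadjacent_matching (W :\: [set a j; b j]) (P :\ j).
Proof.
case=> a_inj b_inj a_neq_b abW jP.
have sub_P : {subset P :\ j <= P} by move=> i /setD1P[].
split=> [i k /sub_P iP /sub_P kP | i k /sub_P iP /sub_P kP | i k /sub_P iP /sub_P kP |].
- exact: a_inj.
- exact: b_inj.
- exact: a_neq_b.
move=> i /setD1P[ij iP]; case/and3P: (abW i iP) => aW bW nadj.
rewrite !inE aW bW nadj (negbTE (a_neq_b i j iP jP)) (eq_sym (b i)).
rewrite (negbTE (a_neq_b j i jP iP)) !andbT !orbF.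
apply/andP; split; apply: contra ij => /eqP.
  by move/(a_inj _ _ iP jP) => ->.
by move/(b_inj _ _ iP jP) => ->.
Qed.

Lemma proper_list_colouring_common_colour L W P j c phi :
  nonadjacent_matching W P -> j \in P -> c \in L (a j) -> c \in L (b j) ->
  proper_list_colouring (fun v => L v :\ c) (W :\: [set a j; b j]) phi ->
  proper_list_colouring L W (fun v => if v \in [set a j; b j] then c else phi v).
Proof.
case=> _ _ _ abW jP ca cb [phiL phi_proper].
case/and3P: (abW j jP) => _ _ nadj.
have phiL' v : v \in W -> v \notin [set a j; b j] -> phi v \in L v :\ c.
  by move=> vW vab; apply: phiL; rewrite inE vab.
split=> [v vW | u v uW vW neq_uv adj_uv].
  by case: ifPn => [/set2P[]-> // | vab]; case/setD1P: (phiL' v vW vab).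
case: ifPn => uab; case: ifPn => vab.
- case/set2P: uab neq_uv adj_uv => ->; case/set2P: vab => -> //;
    by rewrite ?eqxx // => _ adj_ab; move: nadj; rewrite ?adj_ab // adjC adj_ab.
- by case/setD1P: (phiL' v vW vab); rewrite eq_sym.
- by case/setD1P: (phiL' u uW uab).
- by apply: phi_proper; rewrite // inE ?uab ?vab.
Qed.

Lemma hall_condition_disjoint_lists L W P :
  nonadjacent_matching W P -> {in P, forall j, [disjoint L (a j) & L (b j)]} ->
  {in W, forall v, #|W| <= #|L v| + #|P|} -> hall_condition L W.
Proof.
move=> matchWP disjL bigL S sSW.
have [-> | [v vS]] := set_0Vmem S; first by rewrite cards0.
have cardS := subset_leq_card sSW.
case: (pickP (fun j => [&& j \in P, a j \in S & b j \in S]))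
  => [j /and3P[jP aS bS] | avoidS].
  have := card_matching matchWP.
  have := bigL _ (subsetP sSW _ aS); have := bigL _ (subsetP sSW _ bS).
  have: L (a j) :|: L (b j) \subset \bigcup_(i in S) L i by rewrite subUset !bigcup_sup.
  move/subset_leq_card; have := cardsUI (L (a j)) (L (b j)).
  rewrite (disjoint_setI0 (disjL j jP)) cards0; lia.
have := card_avoiding_matching matchWP sSW.
have: {in P, forall j, (a j \notin S) || (b j \notin S)}.
  by move=> j jP; move: (avoidS j); rewrite jP /= -negb_and => ->.
move=> /[swap] /[apply]; have := bigL v (subsetP sSW _ vS).
have := subset_leq_card (bigcup_sup v vS : L v \subset \bigcup_(i in S) L i).
lia.
Qed.

Lemma proper_list_colouring_of_sdr L W phi : sdr L W phi -> proper_list_colouring L W phi.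
Proof.
case=> phi_inj phiL; split=> // u v uW vW neq_uv _.
by apply: contra neq_uv => /eqP/(phi_inj _ _ uW vW)/eqP.
Qed.

Theorem list_colouring_of_nonadjacent_matching (t0 : T) L W P :
  nonadjacent_matching W P -> {in W, forall v, #|W| <= #|L v| + #|P|} ->
  exists phi, proper_list_colouring L W phi.
Proof.
elim: {W}_.+1 {-2}W (ltnSn #|W|) L P => // m IH W leWm L P matchWP bigL.
case: (pickP (fun j => (j \in P) && (L (a j) :&: L (b j) != set0))) => [j | disjL].
  case/andP=> jP /set0Pn[c /setIP[ca cb]].
  have cardW := matching_pair_card matchWP jP.
  have [phi colP] : exists phi, proper_list_colouring (fun v => L v :\ c)
                                  (W :\: [set a j; b j]) phi.
    apply: IH (matching_remove_pair matchWP jP) _; first lia.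
    move=> v /setDP[vW _]; have := bigL v vW.
    rewrite (cardsD1 j P) jP (cardsD1 c (L v)); case: (c \in L v); lia.
  exists (fun v => if v \in [set a j; b j] then c else phi v).
  exact: proper_list_colouring_common_colour matchWP jP ca cb colP.
have disjL' : {in P, forall j, [disjoint L (a j) & L (b j)]}.
  by move=> j jP; rewrite -setI_eq0; move: (disjL j); rewrite jP => /negbFE.
have [phi sdrW] := hall_marriage t0 (hall_condition_disjoint_lists matchWP disjL' bigL).
by exists phi; apply: proper_list_colouring_of_sdr.
Qed.

End ListColouring.

Lemma card_ord_set_of_seq M (s : seq nat) :
  {in s, forall c, c < M} -> size (undup s) <= #|[set c : 'I_M | val c \in s]|.
Proof.
move=> s_lt; rewrite cardE -(size_map val); apply: uniq_leq_size (undup_uniq s) _.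
move=> c; rewrite mem_undup => cs; apply/mapP; exists (Ordinal (s_lt c cs)) => //.
by rewrite mem_enum inE.
Qed.

Section Hypergraph.
Variables (V E : finType) (verts : E -> {set V}).

Lemma list_edge_colourable_of_disjoint_pairs (J : finType) (a b : J -> E) k :
  injective a -> injective b -> (forall i j, a i != b j) ->
  (forall j, [disjoint verts (a j) & verts (b j)]) -> #|E| <= k + #|J| ->
  list_edge_colourable verts k.
Proof.
move=> a_inj b_inj a_neq_b disj_ab cardE C bigC.
pose M := (\max_(e : E) \max_(c <- C e) c).+1.
have C_lt e : {in C e, forall c, c < M}.
  move=> c ce; rewrite ltnS; apply: leq_trans (leq_bigmax e).
  exact: (@leq_bigmax_seq _ _ xpredT (fun c => c) c ce).
pose L e := [set c : 'I_M | val c \in C e].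
pose meets u v := verts u :&: verts v != set0.
have meetsC : symmetric meets by move=> u v; rewrite /meets setIC.
have matching : nonadjacent_matching meets a b [set: E] [set: J].
  split=> [i j _ _ | i j _ _ | i j _ _ | j _]; [exact: a_inj | exact: b_inj | by [] |].
  by rewrite !inE /meets setI_eq0 disj_ab.
have bigL : {in [set: E], forall e, #|[set: E]| <= #|L e| + #|[set: J]|}.
  move=> e _; rewrite !cardsT; apply: leq_trans cardE _.
  by rewrite leq_add2r (leq_trans (bigC e)) // card_ord_set_of_seq.
have [phi [phiL phi_proper]] :=
  list_colouring_of_nonadjacent_matching meetsC ord0 matching bigL.
exists (fun e => val (phi e)); split=> [e | e f neq_ef eq_phi].
  by have := phiL e; rewrite !inE => /(_ isT).
rewrite -setI_eq0; apply/negPn/negP => meets_ef.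
have := phi_proper e f (in_setT e) (in_setT f) neq_ef meets_ef.
by rewrite (val_inj eq_phi) eqxx.
Qed.

Definition nonneighbours (e f : E) : {set E} :=
  ~: (nbhd verts e :&: nbhd verts f :|: [set e; f]).

Lemma card_nonneighbours n t e f :
  t_useful verts n t e f -> #|E| < #|nonneighbours e f| + t * n.
Proof.
case=> _ _ small_common; rewrite /nonneighbours.
have := cardsC (nbhd verts e :&: nbhd verts f :|: [set e; f]).
have [cardU _] := leq_card_setU (nbhd verts e :&: nbhd verts f) [set e; f].
have := cards2 e f; case: (e != f); lia.
Qed.

Lemma nonneighbours_disjoint e f x :
  x \in nonneighbours e f ->
  [disjoint verts e & verts x] || [disjoint verts f & verts x].
Proof.
rewrite !inE !negb_or -!setI_eq0 => /andP[/nandP common /andP[xe xf]].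
by case: common; rewrite ?xe ?xf /= negbK => ->; rewrite ?orbT.
Qed.

Lemma nonneighbours_meeting e f y :
  verts e :&: verts y != set0 -> verts f :&: verts y != set0 ->
  y \notin nonneighbours e f.
Proof.
move=> ey fy; rewrite !inE !negb_or ey fy.
by case: (y == e); case: (y == f).
Qed.

Lemma list_edge_colourable_of_useful_pairs n t (J : finType) (g : J * bool -> E) :
  injective g -> (forall u v, verts (g u) :&: verts (g v) != set0) ->
  (forall j, t_useful verts n t (g (j, false)) (g (j, true))) ->
  t * n + #|J| = #|E|.+1 -> list_edge_colourable verts (t * n).-1.
Proof.
move=> g_inj g_meet useful cardJ.
pose K j := nonneighbours (g (j, false)) (g (j, true)).
have [x [x_inj xK]] : exists x, sdr K [set: J] x.
  have [j0 _ | J0] := pickP (@predT J); last first.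
    by exists (g \o pair^~ false); split=> j; move: (J0 j).
  apply: (hall_marriage (g (j0, false)) (hall_condition_large _)) => j _.
  by have := card_nonneighbours (useful j); rewrite cardsT /K; lia.
pose side j := verts (g (j, false)) :&: verts (x j) != set0.
pose y j := g (j, side j).
apply: (@list_edge_colourable_of_disjoint_pairs _ x y).
- by move=> i j; apply: x_inj; rewrite inE.
- by move=> i j /g_inj [].
- move=> i j; have := nonneighbours_meeting (g_meet (i, false) (j, side j))
                                              (g_meet (i, true) (j, side j)).
  by apply: contraNneq; rewrite /y => <-; apply/xK/in_setT.
- move=> j; rewrite disjoint_sym /y -!setI_eq0.
  have := nonneighbours_disjoint (xK j (in_setT j)); rewrite -!setI_eq0.
  by case: (boolP (side j)) => [/negbTE-> | /negbNE].
- lia.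
Qed.

End Hypergraph.

Lemma pair_index_lt r (jb : 'I_r.+1 * bool) : 2 * jb.1 + jb.2 < 2 * r + 2.
Proof. by case: jb => [[j /= j_lt] []]; lia. Qed.

Definition pair_index r (jb : 'I_r.+1 * bool) : 'I_(2 * r + 2) :=
  Ordinal (pair_index_lt jb).

Lemma pair_index_inj r : injective (@pair_index r).
Proof.
move=> [i b] [j c] /(congr1 val) /= eq_ij.
have eq_bc : b = c by case: b c eq_ij => [] [] //=; lia.
by subst c; congr (_, _); apply/val_inj/eqP; move/addIn/eqP: eq_ij; rewrite eqn_pmul2l.
Qed.

Theorem proposition4p3 (V E : finType) (verts : E -> {set V})
    (verts_nonempty : forall e : E, verts e != set0)
    (n t : nat) (hn : #|V| = n) (hedges : t * n < #|E|)
    (es : 'I_(2 * (#|E| - t * n) + 2) -> E)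
    (es_inj : injective es)
    (es_inter : forall i j, verts (es i) :&: verts (es j) != set0)
    (es_useful : forall i j : 'I_(2 * (#|E| - t * n) + 2),
        ~~ odd i -> val j = (val i).+1 -> t_useful verts n t (es i) (es j)) :
  list_chromatic_index_lt verts (t * n).
Proof.
move: es es_inj es_inter es_useful; set r := #|E| - t * n => es es_inj es_inter es_useful.
have useful (j : 'I_r.+1) :
    t_useful verts n t (es (pair_index (j, false))) (es (pair_index (j, true))).
  by apply: es_useful; rewrite /= ?addn0 ?addn1 ?mul2n ?odd_double.
have [_ _ tn_ge3] := useful ord0.
exists (t * n).-1; first lia.
apply: (list_edge_colourable_of_useful_pairs (g := es \o @pair_index r)) useful _.
- exact/inj_comp/pair_index_inj.
- by move=> u v; apply: es_inter.
- by rewrite card_ord /r; lia.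
Qed.
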